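(* Let $q\in\mathbb{C}$, $|q|<1$, $\ell\in\mathbb{N}$ and $\alpha_j,\beta_j\in\mathbb{N}$ for $j=1,\dots,\ell$. In $\mathbb{Q}\langle\pi,y\rangle$ consider $$X=(\pi-\mathbf{1})^{\alpha_1-1}\rho\,y^{\beta_1}(\pi-\mathbf{1})^{\alpha_2}y^{\beta_2}\cdots(\pi-\mathbf{1})^{\alpha_\ell}y^{\beta_\ell},\quad X^\vee=(\pi-\mathbf{1})^{\beta_\ell-1}\rho\,y^{\alpha_\ell}(\pi-\mathbf{1})^{\beta_{\ell-1}}y^{\alpha_{\ell-1}}\cdots(\pi-\mathbf{1})^{\beta_1}y^{\alpha_1}.$$ Then $\mathfrak{z}_q^{\mathrm{III}}[X]=\mathfrak{z}_q^{\mathrm{III}}[X^\vee]$.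
   Context: $\mathbb{Q}\langle\pi,y\rangle$ is the free noncommutative $\mathbb{Q}$-algebra on $\pi,y$, $\mathbf{1}$ its unit, $\rho:=\pi-\mathbf{1}$. For $\mathbf{s}=(s_1,\dots,s_d)$ with $s_1\ge1$, $s_j\ge0$, let $W(\mathbf{s})=\pi^{s_1-1}\rho y\pi^{s_2}y\cdots\pi^{s_d}y$ and $\mathfrak{z}_q^{\mathrm{III}}[\mathbf{s}]=\sum_{k_1>\dots>k_d>0}\frac{q^{k_1}}{\prod_j(1-q^{k_j})^{s_j}}$. $\mathfrak{z}_q^{\mathrm{III}}$ is extended to the $\mathbb{Q}$-span of the elements $W(\mathbf{s})$ linearly by $\mathfrak{z}_q^{\mathrm{III}}[W(\mathbf{s})]=\mathfrak{z}_q^{\mathrm{III}}[\mathbf{s}]$; expanding the powers of $\pi-\mathbf{1}$ shows $X,X^\vee$ lie in this span. *)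

From Stdlib Require Import Reals QArith Qreals List Arith.
From Coquelicot Require Import Coquelicot.
Import ListNotations.

Inductive letter : Set := Pi | Yl.
Definition word := list letter.

(** An element of Q<pi,y>, given as a formal (finite) Q-linear combination
    of words: the list [(c1,w1); ...; (cn,wn)] stands for c1 w1 + ... + cn wn.
    Two lists denote the same algebra element iff they have the same
    coefficient function [nc_coef]. *)
Definition ncpoly := list (Q * word).

Fixpoint word_eqb (u v : word) : bool :=
  match u, v with
  | [], [] => true
  | Pi :: u', Pi :: v' => word_eqb u' v'
  | Yl :: u', Yl :: v' => word_eqb u' v'
  | _, _ => false
  end.

Definition nc_coef (a : ncpoly) (w : word) : Q :=
  fold_right (fun p acc => if word_eqb (snd p) w then (fst p + acc)%Q else acc) 0%Q a.

Definition nc_one : ncpoly := [(1%Q, [])].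
Definition nc_pi  : ncpoly := [(1%Q, [Pi])].
Definition nc_y   : ncpoly := [(1%Q, [Yl])].
Definition nc_add (a b : ncpoly) : ncpoly := a ++ b.
Definition nc_scale (c : Q) (a : ncpoly) : ncpoly :=
  map (fun p => (c * fst p, snd p)%Q) a.
Definition nc_sub (a b : ncpoly) : ncpoly := nc_add a (nc_scale (-1)%Q b).
Definition nc_mul (a b : ncpoly) : ncpoly :=
  flat_map (fun p => map (fun r => (fst p * fst r, snd p ++ snd r)%Q) b) a.
Fixpoint nc_pow (a : ncpoly) (n : nat) : ncpoly :=
  match n with O => nc_one | S n' => nc_mul a (nc_pow a n') end.
Definition nc_prod (l : list ncpoly) : ncpoly := fold_right nc_mul nc_one l.

Definition nc_rho : ncpoly := nc_sub nc_pi nc_one.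

Definition nc_W (s : list nat) : ncpoly :=
  match s with
  | [] => nc_one (* not used: d >= 1 *)
  | s1 :: s' =>
      nc_prod ([nc_pow nc_pi (s1 - 1); nc_rho; nc_y]
               ++ flat_map (fun sj => [nc_pow nc_pi sj; nc_y]) s')
  end.

Fixpoint sumC (f : nat -> C) (n : nat) : C :=
  match n with O => RtoC 0 | S n' => Cplus (sumC f n') (f n') end.

(** [inner q s n] = sum over n >= k_1 > k_2 > ... > k_m > 0 of
    prod_j 1/(1-q^{k_j})^{s_j}, for s = (s_1,...,s_m); equals 1 if m = 0. *)
Fixpoint inner (q : C) (s : list nat) (n : nat) : C :=
  match s with
  | [] => RtoC 1
  | sj :: s' =>
      sumC (fun k => Cmult (Cinv (Cpow (Cminus (RtoC 1) (Cpow q (S k))) sj))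
                           (inner q s' k)) n
  end.

(** N-th partial sum: sum over N >= k_1 > ... > k_d > 0 of
    q^{k_1} / prod_j (1-q^{k_j})^{s_j}. *)
Definition zIII_partial (q : C) (s : list nat) (N : nat) : C :=
  match s with
  | [] => RtoC 0
  | s1 :: s' =>
      sumC (fun k => Cmult (Cmult (Cpow q (S k))
                                  (Cinv (Cpow (Cminus (RtoC 1) (Cpow q (S k))) s1)))
                           (inner q s' k)) N
  end.

Definition climit (u : nat -> C) : C :=
  (real (Lim_seq (fun n => Re (u n))), real (Lim_seq (fun n => Im (u n)))).

Definition zIII_s (q : C) (s : list nat) : C := climit (zIII_partial q s).

(** A word pi^{a1} y pi^{a2} y ... pi^{ad} y (d >= 1) is parsed to
    Some (a1+1, a2, ..., ad), i.e. the index s with W(s) = pi^{a1} rho y ...;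
    any other word gives None. *)
Fixpoint parse_aux (w : word) (cnt : nat) : option (list nat) :=
  match w with
  | [] => match cnt with O => Some [] | S _ => None end
  | Pi :: w' => parse_aux w' (S cnt)
  | Yl :: w' => option_map (cons cnt) (parse_aux w' O)
  end.

Definition parse (w : word) : option (list nat) :=
  match parse_aux w O with
  | Some (a1 :: r) => Some (S a1 :: r)
  | _ => None
  end.

(** value of z on rho * w, for a word w *)
Definition zword (q : C) (w : word) : C :=
  match parse w with Some s => zIII_s q s | None => RtoC 0 end.

Fixpoint lead_pi (u : word) : nat :=
  match u with Pi :: u' => S (lead_pi u') | _ => O end.

(** Every element E of span{W(s)} is uniquely E = rho * P with P a combination
    of words ending in y, and then P = rho_inv E, where the coefficient of a word
    w in P is sum_{k>=1} (coefficient of pi^k w in E).  [rho_inv] computes this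
    P entrywise: the entry (c, pi^m v) (v not starting with pi) contributes
    (c, pi^{m-k} v) for k = 1..m. *)
Definition rho_inv (E : ncpoly) : ncpoly :=
  flat_map (fun p => map (fun k => (fst p, skipn (S k) (snd p))) (seq 0 (lead_pi (snd p)))) E.

(** z_q^III[E] for E in span{W(s)}: z[rho * pi^{a1} y ... pi^{ad} y] := z[(a1+1,a2,..,ad)],
    extended linearly; i.e. z[E] = sum_{(c,w) in rho_inv E} c * zword w. *)
Definition zIII (q : C) (E : ncpoly) : C :=
  fold_right (fun p acc => Cplus (Cmult (RtoC (Q2R (fst p))) (zword q (snd p))) acc)
             (RtoC 0) (rho_inv E).

From Stdlib Require Import Reals QArith Qreals List Arith Lia Lra.
From Coquelicot Require Import Coquelicot.
Import ListNotations.

(* For a word w in pi and y ending in y, z_q^III[rho w] is a sum over levels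
   k_1 > k_2 > ... > 0: at level k the letter pi contributes x_k = 1/(1-q^k), the letter rho
   contributes x_k - 1 = q^k/(1-q^k), and y passes to a strictly lower level.  Extending this
   linearly and evaluating pi - 1 as x_k - 1, z_q^III[X] is the level series of the word
   rho^a1 y^b1 ... rho^al y^bl.  Expanding every q^k/(1-q^k) geometrically and every y by its
   gap d = k - k' - 1 turns that series into the sum over m_i, d_j >= 0 of q^(sum (m_i+1)(d_j+1)),
   the exponent summing over the pairs of a rho left of a y.  This sum is invariant under
   reversing the word and exchanging rho with y, which maps the word of X to that of X^vee.
   The rearrangement is justified by cutting all expansions after K terms: at |q| the cut
   double sums increase to the same limit as the partial level sums, and they dominate the
   corresponding complex quantities. *)

Open Scope R_scope.

Fixpoint sumR (f : nat -> R) (n : nat) : R :=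
  match n with O => 0 | S n' => sumR f n' + f n' end.

Lemma sumC_S f n : sumC f (S n) = Cplus (sumC f n) (f n).
Proof. reflexivity. Qed.

Lemma sumR_S f n : sumR f (S n) = sumR f n + f n.
Proof. reflexivity. Qed.

Lemma sumC_ext f g n : (forall i, (i < n)%nat -> f i = g i) -> sumC f n = sumC g n.
Proof.
  induction n as [|n IH]; intros H; simpl; auto.
  rewrite IH by (intros; apply H; lia). now rewrite H by lia.
Qed.

Lemma sumR_ext f g n : (forall i, (i < n)%nat -> f i = g i) -> sumR f n = sumR g n.
Proof.
  induction n as [|n IH]; intros H; simpl; auto.
  rewrite IH by (intros; apply H; lia). now rewrite H by lia.
Qed.

Lemma sumC_0 n : sumC (fun _ => RtoC 0) n = RtoC 0.
Proof. induction n as [|n IH]; simpl; auto. rewrite IH. ring. Qed.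

Lemma sumC_add f g n : sumC (fun i => Cplus (f i) (g i)) n = Cplus (sumC f n) (sumC g n).
Proof. induction n as [|n IH]; simpl. ring. rewrite IH. ring. Qed.

Lemma sumC_mult_l c f n : sumC (fun i => Cmult c (f i)) n = Cmult c (sumC f n).
Proof. induction n as [|n IH]; simpl. ring. rewrite IH. ring. Qed.

Lemma sumC_mult_r f n c : sumC (fun i => Cmult (f i) c) n = Cmult (sumC f n) c.
Proof. induction n as [|n IH]; simpl. ring. rewrite IH. ring. Qed.

Lemma sumR_mult_l c f n : sumR (fun i => c * f i) n = c * sumR f n.
Proof. induction n as [|n IH]; simpl. ring. rewrite IH. ring. Qed.

Lemma sumC_exchange f n m :
  sumC (fun i => sumC (fun j => f i j) m) n = sumC (fun j => sumC (fun i => f i j) n) m.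
Proof. induction n as [|n IH]; simpl. now rewrite sumC_0. now rewrite IH, <- sumC_add. Qed.

Lemma sumC_split f n e : sumC f (n + e) = Cplus (sumC f n) (sumC (fun i => f (n + i)%nat) e).
Proof.
  induction e as [|e IH]; simpl. rewrite Nat.add_0_r. ring.
  rewrite Nat.add_succ_r. simpl. rewrite IH. ring.
Qed.

Lemma sumR_split f n e : sumR f (n + e) = sumR f n + sumR (fun i => f (n + i)%nat) e.
Proof.
  induction e as [|e IH]; simpl. rewrite Nat.add_0_r. ring.
  rewrite Nat.add_succ_r. simpl. rewrite IH. ring.
Qed.

Lemma sumC_S_l f n : sumC f (S n) = Cplus (f O) (sumC (fun i => f (S i)) n).
Proof. induction n as [|n IH]; simpl in *. ring. rewrite IH. ring. Qed.

Lemma sumC_rev f k : sumC f k = sumC (fun d => f (k - 1 - d)%nat) k.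
Proof.
  induction k as [|k IH]; auto.
  rewrite (sumC_S_l (fun d => f (S k - 1 - d)%nat)). simpl sumC at 1. rewrite IH, Cplus_comm.
  replace (S k - 1 - 0)%nat with k by lia.
  f_equal. apply sumC_ext. intros. f_equal. lia.
Qed.

Lemma sumC_trunc f n K :
  sumC (fun d => if (d <? K)%nat then f d else RtoC 0) n = sumC f (Nat.min n K).
Proof.
  induction n as [|n IH]; auto.
  simpl sumC at 1. rewrite IH. destruct (Nat.ltb_spec n K).
  - replace (Nat.min (S n) K) with (S (Nat.min n K)) by lia. simpl. do 2 f_equal. lia.
  - replace (Nat.min (S n) K) with (Nat.min n K) by lia. ring.
Qed.

(* Reindexing the pairs (k, d) with d < min(k, K) by (d, j) with j := k - 1 - d. *)
Lemma sumC_triangle (f : nat -> nat -> C) N K :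
  sumC (fun k => sumC (fun d => if (d <? K)%nat then f d (k - 1 - d)%nat else RtoC 0) k) N
  = sumC (fun d => sumC (f d) (N - 1 - d)) K.
Proof.
  induction N as [|N IH].
  - transitivity (sumC (fun _ => RtoC 0) K).
    + now rewrite sumC_0.
    + apply sumC_ext. reflexivity.
  - simpl sumC at 1. rewrite IH, sumC_trunc, Nat.min_comm, <- sumC_trunc, <- sumC_add.
    apply sumC_ext. intros d Hd. destruct (Nat.ltb_spec d N).
    + replace (S N - 1 - d)%nat with (S (N - 1 - d)) by lia. reflexivity.
    + replace (S N - 1 - d)%nat with (N - 1 - d)%nat by lia. ring.
Qed.

Lemma RtoC_sumR f n : RtoC (sumR f n) = sumC (fun i => RtoC (f i)) n.
Proof. induction n as [|n IH]; simpl; auto. now rewrite RtoC_plus, IH. Qed.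

Lemma Cmod_sumC f n : Cmod (sumC f n) <= sumR (fun i => Cmod (f i)) n.
Proof.
  induction n as [|n IH]; simpl. rewrite Cmod_0. lra.
  eapply Rle_trans. apply Cmod_triangle. lra.
Qed.

Lemma sumR_le f g n : (forall i, (i < n)%nat -> f i <= g i) -> sumR f n <= sumR g n.
Proof.
  induction n as [|n IH]; simpl; intros H. lra.
  apply Rplus_le_compat. apply IH; intros; apply H; lia. apply H; lia.
Qed.

Lemma sumR_nonneg f n : (forall i, (i < n)%nat -> 0 <= f i) -> 0 <= sumR f n.
Proof.
  induction n as [|n IH]; simpl; intros H. lra.
  apply Rplus_le_le_0_compat. apply IH; intros; apply H; lia. apply H; lia.
Qed.

Lemma sumR_mono f n m : (n <= m)%nat -> (forall i, 0 <= f i) -> sumR f n <= sumR f m.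
Proof.
  intros Hnm Hf. replace m with (n + (m - n))%nat by lia. rewrite sumR_split.
  assert (0 <= sumR (fun i => f (n + i)%nat) (m - n)) by (apply sumR_nonneg; auto). lra.
Qed.

Lemma is_lim_seq_sumR (f : nat -> nat -> R) (l : nat -> R) n :
  (forall i, (i < n)%nat -> is_lim_seq (fun K => f K i) (l i)) ->
  is_lim_seq (fun K => sumR (f K) n) (sumR l n).
Proof.
  induction n as [|n IH]; intros H; simpl. apply is_lim_seq_const.
  apply is_lim_seq_plus'. apply IH; intros; apply H; lia. apply H; lia.
Qed.

(** * Majorization of increments *)

(* Closed under sums and products, this lets real weights at [|q|] control both
   complex weights and the change of a complex weight when a truncation is relaxed. *)
Definition majorized (x x' : C) (X X' : R) : Prop :=
  Cmod (Cminus x' x) <= X' - X /\ Cmod x <= X /\ X <= X'.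

Lemma majorized_refl x X : Cmod x <= X -> majorized x x X X.
Proof.
  intros H. repeat split; try lra.
  replace (Cminus x x) with (RtoC 0) by ring. rewrite Cmod_0. lra.
Qed.

Lemma majorized_nonneg x x' X X' : majorized x x' X X' -> 0 <= X.
Proof. intros [_ [H _]]. pose proof (Cmod_ge_0 x). lra. Qed.

Lemma majorized_bound_r x x' X X' : majorized x x' X X' -> Cmod x' <= X'.
Proof.
  intros [H1 [H2 H3]]. replace x' with (Cplus x (Cminus x' x)) by ring.
  eapply Rle_trans. apply Cmod_triangle. lra.
Qed.

Lemma majorized_0 : majorized (RtoC 0) (RtoC 0) 0 0.
Proof. apply majorized_refl. rewrite Cmod_0. lra. Qed.

Lemma majorized_from_0 x' X' : Cmod x' <= X' -> majorized (RtoC 0) x' 0 X'.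
Proof.
  intros H. pose proof (Cmod_ge_0 x'). repeat split; try lra.
  - replace (Cminus x' 0) with x' by ring. lra.
  - rewrite Cmod_0. lra.
Qed.

Lemma majorized_add a a' A A' b b' B B' : majorized a a' A A' -> majorized b b' B B' ->
  majorized (Cplus a b) (Cplus a' b') (A + B) (A' + B').
Proof.
  intros [H1 [H2 H3]] [G1 [G2 G3]]. repeat split; try lra.
  - replace (Cminus (Cplus a' b') (Cplus a b)) with (Cplus (Cminus a' a) (Cminus b' b)) by ring.
    eapply Rle_trans. apply Cmod_triangle. lra.
  - eapply Rle_trans. apply Cmod_triangle. lra.
Qed.

Lemma majorized_mul a a' A A' b b' B B' : majorized a a' A A' -> majorized b b' B B' ->
  majorized (Cmult a b) (Cmult a' b') (A * B) (A' * B').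
Proof.
  intros Ha Hb.
  pose proof (majorized_bound_r _ _ _ _ Hb) as Rb.
  pose proof (majorized_nonneg _ _ _ _ Ha) as Na. pose proof (majorized_nonneg _ _ _ _ Hb) as Nb.
  destruct Ha as [H1 [H2 H3]], Hb as [G1 [G2 G3]].
  pose proof (Cmod_ge_0 (Cminus a' a)). pose proof (Cmod_ge_0 b').
  pose proof (Cmod_ge_0 a). pose proof (Cmod_ge_0 (Cminus b' b)).
  pose proof (Cmod_ge_0 b).
  repeat split.
  - replace (Cminus (Cmult a' b') (Cmult a b))
      with (Cplus (Cmult (Cminus a' a) b') (Cmult a (Cminus b' b))) by ring.
    eapply Rle_trans. apply Cmod_triangle. rewrite !Cmod_mult.
    apply Rle_trans with ((A' - A) * B' + A * (B' - B)); [|right; ring].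
    apply Rplus_le_compat; apply Rmult_le_compat; lra.
  - rewrite Cmod_mult. apply Rmult_le_compat; lra.
  - apply Rmult_le_compat; lra.
Qed.

Lemma majorized_sum f f' F F' n :
  (forall i, (i < n)%nat -> majorized (f i) (f' i) (F i) (F' i)) ->
  majorized (sumC f n) (sumC f' n) (sumR F n) (sumR F' n).
Proof.
  induction n as [|n IH]; simpl; intros H. apply majorized_0.
  apply majorized_add. apply IH; intros; apply H; lia. apply H; lia.
Qed.

Lemma majorized_sum_longer f f' F F' n n' : (n <= n')%nat ->
  (forall i, (i < n)%nat -> majorized (f i) (f' i) (F i) (F' i)) ->
  (forall i, (n <= i < n')%nat -> Cmod (f' i) <= F' i) ->
  majorized (sumC f n) (sumC f' n') (sumR F n) (sumR F' n').
Proof.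
  intros Hn H1 H2. replace n' with (n + (n' - n))%nat by lia. rewrite sumC_split, sumR_split.
  replace (sumC f n) with (Cplus (sumC f n) (RtoC 0)) by ring.
  replace (sumR F n) with (sumR F n + 0) by ring.
  apply majorized_add. apply majorized_sum; auto.
  apply majorized_from_0. eapply Rle_trans. apply Cmod_sumC.
  apply sumR_le. intros. apply H2. lia.
Qed.

(** * Level weights of words in pi, rho, y *)

Inductive sym : Set := Spi | Srho | Sy.

Definition xfac (q : C) k := Cinv (Cminus (RtoC 1) (Cpow q k)).
Definition tfac (q : C) k := Cminus (xfac q k) (RtoC 1).
Definition rtfac (r : R) k := r ^ k / (1 - r ^ k).

(* [None]: the exact factor [x_k - 1 = q^k/(1-q^k)] with [x_k := xfac q k];
   [Some K]: its expansion [sum_(m>=0) q^(k(m+1))] cut after [K] terms. *)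
Definition rho_fac (q : C) (Kt : option nat) k : C :=
  match Kt with None => tfac q k | Some K => sumC (fun m => Cpow q (k * S m)) K end.
Definition rrho_fac (r : R) (Kt : option nat) k : R :=
  match Kt with None => rtfac r k | Some K => sumR (fun m => r ^ (k * S m)) K end.

Definition gap_ok (Kd : option nat) d : bool :=
  match Kd with None => true | Some D => (d <? D)%nat end.

Definition trunc_le (a b : option nat) : Prop :=
  match a, b with
  | _, None => True
  | None, Some _ => False
  | Some x, Some y => (x <= y)%nat
  end.

(* Untruncated, at level [k] the letter [Spi] multiplies by [x_k], [Srho] by [x_k - 1], and
   [Sy] sums over the lower levels [k - 1 - d]; [Kd = Some D] restricts the gaps to [d < D].
   Summed over [k], the weight of [Srho :: v] is the series of z_q^III at the word [v]. *)
Fixpoint weight (q : C) Kt Kd (w : list sym) (k : nat) : C :=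
  match w with
  | [] => if (k =? 0)%nat then RtoC 1 else RtoC 0
  | Spi :: w' => Cmult (Cplus (RtoC 1) (rho_fac q Kt k)) (weight q Kt Kd w' k)
  | Srho :: w' => Cmult (rho_fac q Kt k) (weight q Kt Kd w' k)
  | Sy :: w' => sumC (fun d => if gap_ok Kd d then weight q Kt Kd w' (k - 1 - d) else RtoC 0) k
  end.

Fixpoint rweight (r : R) Kt Kd (w : list sym) (k : nat) : R :=
  match w with
  | [] => if (k =? 0)%nat then 1 else 0
  | Spi :: w' => (1 + rrho_fac r Kt k) * rweight r Kt Kd w' k
  | Srho :: w' => rrho_fac r Kt k * rweight r Kt Kd w' k
  | Sy :: w' => sumR (fun d => if gap_ok Kd d then rweight r Kt Kd w' (k - 1 - d) else 0) k
  end.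

Lemma trunc_le_refl o : trunc_le o o.
Proof. destruct o; simpl; auto. Qed.

Lemma gap_ok_mono Kd Kd' d : trunc_le Kd Kd' -> gap_ok Kd d = true -> gap_ok Kd' d = true.
Proof.
  destruct Kd, Kd'; simpl; auto; intros H1 H2; try contradiction.
  apply Nat.ltb_lt in H2. apply Nat.ltb_lt. lia.
Qed.

Fixpoint nil_or_y_final (w : list sym) : bool :=
  match w with
  | [] => true
  | [Sy] => true
  | [_] => false
  | _ :: w' => nil_or_y_final w'
  end.

Lemma nil_or_y_final_tail x w : nil_or_y_final (x :: w) = true -> nil_or_y_final w = true.
Proof. destruct w; auto. intros H. destruct x; exact H. Qed.

Lemma nil_or_y_final_snoc x u : nil_or_y_final (x :: u ++ [Sy]) = true.
Proof. revert x. induction u as [|y u IH]; intros x; destruct x; auto; apply (IH y). Qed.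

Lemma in_y_of_nil_or_y_final w : nil_or_y_final w = true -> w <> [] -> In Sy w.
Proof.
  induction w as [|x w IH]; intros H Hne; [congruence|].
  destruct w as [|x' w].
  - destruct x; simpl in H; try discriminate. now left.
  - right. apply IH. now apply (nil_or_y_final_tail x). discriminate.
Qed.

Lemma weight_level_0 q Kt Kd w : In Sy w -> weight q Kt Kd w 0 = RtoC 0.
Proof.
  induction w as [|x w IH]; simpl; intros H. contradiction.
  destruct x; destruct H as [H|H]; try discriminate; auto; rewrite IH by auto; ring.
Qed.

Lemma rweight_level_0 r Kt Kd w : In Sy w -> rweight r Kt Kd w 0 = 0.
Proof.
  induction w as [|x w IH]; simpl; intros H. contradiction.
  destruct x; destruct H as [H|H]; try discriminate; auto; rewrite IH by auto; ring.
Qed.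

(* The letter [pi] is [rho + 1]. *)
Lemma weight_split_pi q Kt Kd u v k :
  weight q Kt Kd (u ++ Spi :: v) k
  = Cplus (weight q Kt Kd (u ++ v) k) (weight q Kt Kd (u ++ Srho :: v) k).
Proof.
  revert k. induction u as [|x u IH]; intros k; simpl. ring.
  destruct x; try (rewrite IH; ring).
  rewrite <- sumC_add. apply sumC_ext. intros d _. destruct (gap_ok Kd d). apply IH. ring.
Qed.

Lemma geom_sum_C (p : C) K :
  Cmult (Cminus (RtoC 1) p) (sumC (fun m => Cpow p (S m)) K) = Cminus p (Cpow p (S K)).
Proof.
  induction K as [|K IH]. simpl. ring.
  rewrite sumC_S, Cmult_plus_distr_l, IH. simpl. ring.
Qed.

Lemma geom_sum_R (p : R) K : (1 - p) * sumR (fun m => p ^ (S m)) K = p - p ^ (S K).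
Proof.
  induction K as [|K IH]. simpl. ring.
  rewrite sumR_S, Rmult_plus_distr_l, IH. simpl. ring.
Qed.

Lemma Cmod_one_sub_ge p : 1 - Cmod p <= Cmod (Cminus (RtoC 1) p).
Proof.
  pose proof (Cmod_triangle (Cminus (RtoC 1) p) p) as H.
  replace (Cplus (Cminus (RtoC 1) p) p) with (RtoC 1) in H by ring.
  rewrite Cmod_1 in H. lra.
Qed.

Section RealFactor.
Variable r : R.
Hypothesis (Hr0 : 0 <= r) (Hr1 : r < 1).

Lemma pow_in_unit k : (1 <= k)%nat -> 0 <= r ^ k < 1.
Proof. intros Hk. split. now apply pow_le. now apply pow_lt_1_compat; [split|lia]. Qed.

Lemma rrho_fac_Some K k : (1 <= k)%nat ->
  rrho_fac r (Some K) k = rtfac r k - (r ^ k) ^ (S K) / (1 - r ^ k).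
Proof.
  intros Hk. pose proof (pow_in_unit k Hk). unfold rrho_fac, rtfac.
  rewrite (sumR_ext _ (fun m => (r ^ k) ^ (S m))) by (intros; apply pow_mult).
  pose proof (geom_sum_R (r ^ k) K) as G.
  apply (Rmult_eq_reg_l (1 - r ^ k)); [rewrite G; field|]; lra.
Qed.

Lemma is_lim_seq_rrho_fac k : (1 <= k)%nat ->
  is_lim_seq (fun K => rrho_fac r (Some K) k) (rtfac r k).
Proof.
  intros Hk. pose proof (pow_in_unit k Hk).
  apply is_lim_seq_ext with (fun K => rtfac r k - (r ^ k) ^ (S K) / (1 - r ^ k)).
  { intros K. symmetry. now apply rrho_fac_Some. }
  replace (Finite (rtfac r k)) with (Finite (rtfac r k - 0 / (1 - r ^ k))) by (f_equal; field; lra).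
  apply is_lim_seq_minus'. apply is_lim_seq_const.
  apply is_lim_seq_div'; [|apply is_lim_seq_const|lra].
  apply (is_lim_seq_incr_1 (fun n => (r ^ k) ^ n)). apply is_lim_seq_geom.
  rewrite Rabs_pos_eq; lra.
Qed.

End RealFactor.

Section ComplexFactor.
Variable q : C.
Hypothesis Hq : Cmod q < 1.

Lemma one_sub_pow_neq_0 k : (1 <= k)%nat -> Cminus (RtoC 1) (Cpow q k) <> RtoC 0.
Proof.
  intros Hk E. pose proof (Cmod_one_sub_ge (Cpow q k)) as H.
  rewrite E, Cmod_0, Cmod_pow in H.
  pose proof (pow_in_unit (Cmod q) (Cmod_ge_0 q) Hq k Hk). lra.
Qed.

Lemma rho_fac_Some K k : (1 <= k)%nat ->
  rho_fac q (Some K) k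
  = Cminus (tfac q k) (Cmult (Cpow (Cpow q k) (S K)) (xfac q k)).
Proof.
  intros Hk. pose proof (one_sub_pow_neq_0 k Hk) as Hp. unfold rho_fac, tfac, xfac.
  rewrite (sumC_ext _ (fun m => Cpow (Cpow q k) (S m))) by (intros; apply Cpow_mult_r).
  pose proof (geom_sum_C (Cpow q k) K) as G.
  set (p := Cpow q k) in *. set (S0 := sumC _ K) in *.
  replace S0 with (Cmult (Cminus p (Cpow p (S K))) (Cinv (Cminus (RtoC 1) p))).
  - field. auto.
  - rewrite <- G. field. auto.
Qed.

Lemma Cmod_pow_mult_xfac n k : (1 <= k)%nat ->
  Cmod (Cmult (Cpow q n) (xfac q k)) <= Cmod q ^ n / (1 - Cmod q ^ k).
Proof.
  intros Hk. pose proof (one_sub_pow_neq_0 k Hk) as Hp.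
  pose proof (Cmod_one_sub_ge (Cpow q k)) as H1. rewrite Cmod_pow in H1.
  pose proof (pow_in_unit (Cmod q) (Cmod_ge_0 q) Hq k Hk).
  unfold xfac. rewrite Cmod_mult, Cmod_inv, Cmod_pow by auto.
  apply Rmult_le_compat_l. apply pow_le, Cmod_ge_0. apply Rinv_le_contravar; lra.
Qed.

Lemma majorized_rho_fac Kt Kt' k : (1 <= k)%nat -> trunc_le Kt Kt' ->
  majorized (rho_fac q Kt k) (rho_fac q Kt' k)
            (rrho_fac (Cmod q) Kt k) (rrho_fac (Cmod q) Kt' k).
Proof.
  intros Hk Ho. pose proof (pow_in_unit (Cmod q) (Cmod_ge_0 q) Hq k Hk).
  assert (Hterm : forall n, Cmod (Cpow q n) <= Cmod q ^ n) by (intros; rewrite Cmod_pow; lra).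
  assert (HK : forall K, Cmod (rho_fac q (Some K) k) <= rrho_fac (Cmod q) (Some K) k).
  { intros K. eapply Rle_trans. apply Cmod_sumC. apply sumR_le. auto. }
  assert (Htfac : tfac q k = Cmult (Cpow q k) (xfac q k)).
  { unfold tfac, xfac. field. now apply one_sub_pow_neq_0. }
  destruct Kt as [K|], Kt' as [K'|]; simpl in Ho; try contradiction.
  - apply majorized_sum_longer; auto. intros. apply majorized_refl. auto.
  - assert (0 <= (Cmod q ^ k) ^ S K / (1 - Cmod q ^ k)).
    { apply Rle_mult_inv_pos. apply pow_le; lra. lra. }
    repeat split.
    + rewrite rho_fac_Some, rrho_fac_Some by (auto using Cmod_ge_0).
      replace (Cminus (rho_fac q None k) _) with (Cmult (Cpow q (k * S K)) (xfac q k))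
        by (rewrite Cpow_mult_r; simpl; ring).
      rewrite <- pow_mult. simpl rrho_fac.
      replace (rtfac _ k - _) with (Cmod q ^ (k * S K) / (1 - Cmod q ^ k)) by ring.
      now apply Cmod_pow_mult_xfac.
    + apply HK.
    + rewrite rrho_fac_Some by (auto using Cmod_ge_0). cbn [rrho_fac]. lra.
  - apply majorized_refl. simpl. rewrite Htfac. now apply Cmod_pow_mult_xfac.
Qed.

End ComplexFactor.

Lemma majorized_weight q w : Cmod q < 1 -> nil_or_y_final w = true ->
  forall Kt Kt' Kd Kd' k, trunc_le Kt Kt' -> trunc_le Kd Kd' ->
  majorized (weight q Kt Kd w k) (weight q Kt' Kd' w k)
            (rweight (Cmod q) Kt Kd w k) (rweight (Cmod q) Kt' Kd' w k).
Proof.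
  intros Hq. induction w as [|x w IH]; intros Hw Kt Kt' Kd Kd' k HKt HKd.
  - simpl. apply majorized_refl. destruct (k =? 0)%nat; rewrite ?Cmod_1, ?Cmod_0; lra.
  - (* At level 0 the factor [x_0 = 1/0] is junk, but a word containing y weighs 0 there. *)
    destruct k as [|k].
    { rewrite !weight_level_0, !rweight_level_0
        by (apply in_y_of_nil_or_y_final; auto; discriminate).
      apply majorized_0. }
    pose proof (nil_or_y_final_tail _ _ Hw) as Hw'.
    destruct x; cbn [weight rweight].
    + apply majorized_mul; [|now apply IH]. apply majorized_add.
      * apply majorized_refl. rewrite Cmod_1. lra.
      * apply majorized_rho_fac; auto; lia.
    + apply majorized_mul; [|now apply IH]. apply majorized_rho_fac; auto; lia.
    + apply majorized_sum. intros d _.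
      destruct (gap_ok Kd d) eqn:E.
      * rewrite (gap_ok_mono Kd Kd' d HKd E). now apply IH.
      * destruct (gap_ok Kd' d); [|apply majorized_0].
        apply majorized_from_0. eapply majorized_bound_r.
        apply (IH Hw' Kt' Kt' Kd' Kd'); apply trunc_le_refl.
Qed.

Lemma rweight_nonneg q w Kt Kd k : Cmod q < 1 -> nil_or_y_final w = true ->
  0 <= rweight (Cmod q) Kt Kd w k.
Proof.
  intros Hq Hw. eapply majorized_nonneg.
  apply (majorized_weight q w Hq Hw Kt Kt Kd Kd k); apply trunc_le_refl.
Qed.

Lemma rweight_gap_trunc r Kt w : forall k D, (k <= D)%nat ->
  rweight r Kt (Some D) w k = rweight r Kt None w k.
Proof.
  induction w as [|x w IH]; intros k D Hk; simpl; auto.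
  destruct x; try (rewrite IH by auto; auto).
  apply sumR_ext. intros d Hd. simpl.
  replace (d <? D)%nat with true by (symmetry; apply Nat.ltb_lt; lia). apply IH. lia.
Qed.

Lemma is_lim_seq_rweight r w : 0 <= r -> r < 1 -> nil_or_y_final w = true -> forall k,
  is_lim_seq (fun K => rweight r (Some K) None w k) (rweight r None None w k).
Proof.
  intros Hr0 Hr1. induction w as [|x w IH]; intros Hw k.
  - apply is_lim_seq_const.
  - destruct k as [|k].
    { apply is_lim_seq_ext with (fun _ => 0).
      - intros K. symmetry. apply rweight_level_0.
        apply in_y_of_nil_or_y_final; auto; discriminate.
      - rewrite rweight_level_0 by (apply in_y_of_nil_or_y_final; auto; discriminate).
        apply is_lim_seq_const. }
    pose proof (nil_or_y_final_tail _ _ Hw) as Hw'.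
    destruct x; cbn [weight rweight].
    + apply is_lim_seq_mult'; auto. apply is_lim_seq_plus'. apply is_lim_seq_const.
      apply is_lim_seq_rrho_fac; auto. lia.
    + apply is_lim_seq_mult'; auto. apply is_lim_seq_rrho_fac; auto. lia.
    + apply (is_lim_seq_sumR (fun K d => rweight r (Some K) None w (S k - 1 - d))). auto.
Qed.

(** * The symmetric double sum *)

(* The sum over [m_i < K] (one per rho) and [d_j < K] (one per y) of [q] to the power
   [sum_(rho_i left of y_j) (m_i + 1)(d_j + 1) + a sum_j (d_j + 1) + b sum_i (m_i + 1)].
   Reversing the word while exchanging rho and y preserves "left of": see [bisum_dual]. *)
Fixpoint bisum (q : C) K (w : list sym) (a b : nat) : C :=
  match w with
  | [] => RtoC 1
  | Spi :: w' => bisum q K w' a b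
  | Srho :: w' => sumC (fun m => Cmult (Cpow q (b * S m)) (bisum q K w' (a + S m) b)) K
  | Sy :: w' => sumC (fun d => Cmult (Cpow q (a * S d)) (bisum q K w' a b)) K
  end.

Fixpoint rbisum (r : R) K (w : list sym) (a b : nat) : R :=
  match w with
  | [] => 1
  | Spi :: w' => rbisum r K w' a b
  | Srho :: w' => sumR (fun m => r ^ (b * S m) * rbisum r K w' (a + S m) b) K
  | Sy :: w' => sumR (fun d => r ^ (a * S d) * rbisum r K w' a b) K
  end.

Lemma Cpow_mult_mult_eq (q : C) a b c e X : (a + b = c + e)%nat ->
  Cmult (Cpow q a) (Cmult (Cpow q b) X) = Cmult (Cpow q c) (Cmult (Cpow q e) X).
Proof. intros H. now rewrite !Cmult_assoc, <- !Cpow_add_r, H. Qed.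

Lemma bisum_snoc_y q K w : forall a b,
  bisum q K (w ++ [Sy]) a b = sumC (fun d => Cmult (Cpow q (a * S d)) (bisum q K w a (b + S d))) K.
Proof.
  induction w as [|x w IH]; intros a b; auto.
  destruct x; simpl; auto;
    erewrite sumC_ext by (intros m _; now rewrite IH, <- sumC_mult_l);
    rewrite sumC_exchange; apply sumC_ext; intros d _;
    rewrite <- sumC_mult_l; apply sumC_ext; intros m _; apply Cpow_mult_mult_eq; nia.
Qed.

Lemma bisum_snoc_rho q K w : forall a b,
  bisum q K (w ++ [Srho]) a b = sumC (fun m => Cmult (Cpow q (b * S m)) (bisum q K w a b)) K.
Proof.
  induction w as [|x w IH]; intros a b; auto.
  destruct x; simpl; auto;
    erewrite sumC_ext by (intros m _; now rewrite IH, <- sumC_mult_l);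
    rewrite sumC_exchange; apply sumC_ext; intros d _;
    rewrite <- sumC_mult_l; apply sumC_ext; intros m _; apply Cpow_mult_mult_eq; nia.
Qed.

Lemma bisum_snoc_pi q K w : forall a b, bisum q K (w ++ [Spi]) a b = bisum q K w a b.
Proof.
  induction w as [|x w IH]; intros a b; auto.
  destruct x; simpl; auto; apply sumC_ext; intros; now rewrite IH.
Qed.

Definition dual_sym (x : sym) : sym := match x with Srho => Sy | Sy => Srho | Spi => Spi end.
Definition dual_word (w : list sym) : list sym := rev (map dual_sym w).

Lemma dual_word_app u v : dual_word (u ++ v) = dual_word v ++ dual_word u.
Proof. unfold dual_word. now rewrite map_app, rev_app_distr. Qed.

Lemma dual_word_repeat x n : dual_word (repeat x n) = repeat (dual_sym x) n.
Proof. unfold dual_word. now rewrite map_repeat, rev_repeat. Qed.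

Theorem bisum_dual q K w : forall a b, bisum q K (dual_word w) a b = bisum q K w b a.
Proof.
  induction w as [|x w IH]; intros a b; auto.
  change (x :: w) with ([x] ++ w). rewrite dual_word_app.
  destruct x; simpl.
  - now rewrite bisum_snoc_pi.
  - rewrite bisum_snoc_y. apply sumC_ext. intros. now rewrite IH.
  - rewrite bisum_snoc_rho. apply sumC_ext. intros. now rewrite IH.
Qed.

Lemma RtoC_rbisum r K w : forall a b, bisum (RtoC r) K w a b = RtoC (rbisum r K w a b).
Proof.
  induction w as [|x w IH]; intros a b; simpl; auto.
  destruct x; auto; rewrite RtoC_sumR; apply sumC_ext; intros;
    now rewrite IH, RtoC_mult, RtoC_pow.
Qed.

Lemma RtoC_rweight r K Kd w : forall k,
  weight (RtoC r) (Some K) Kd w k = RtoC (rweight r (Some K) Kd w k).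
Proof.
  assert (Hfac : forall k, rho_fac (RtoC r) (Some K) k = RtoC (rrho_fac r (Some K) k)).
  { intros k. simpl. rewrite RtoC_sumR. apply sumC_ext. intros. now rewrite RtoC_pow. }
  induction w as [|x w IH]; intros k; cbn [weight rweight].
  - now destruct (k =? 0)%nat.
  - destruct x.
    + now rewrite IH, Hfac, RtoC_mult, RtoC_plus.
    + now rewrite IH, Hfac, RtoC_mult.
    + rewrite RtoC_sumR. apply sumC_ext. intros d _. now destruct (gap_ok Kd d).
Qed.

Lemma rbisum_snoc_y r K w a b :
  rbisum r K (w ++ [Sy]) a b = sumR (fun d => r ^ (a * S d) * rbisum r K w a (b + S d)) K.
Proof.
  apply RtoC_inj. rewrite <- RtoC_rbisum, bisum_snoc_y, RtoC_sumR.
  apply sumC_ext. intros. now rewrite RtoC_rbisum, RtoC_mult, RtoC_pow.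
Qed.

Fixpoint count_y (w : list sym) : nat :=
  match w with [] => O | Sy :: w' => S (count_y w') | _ :: w' => count_y w' end.

Fixpoint pi_free (w : list sym) : bool :=
  match w with [] => true | Spi :: _ => false | _ :: w' => pi_free w' end.

Lemma pi_free_app u v : pi_free (u ++ v) = true <-> pi_free u = true /\ pi_free v = true.
Proof.
  induction u as [|x u IH]; simpl. tauto.
  destruct x; auto. split; [discriminate|intros [H _]; discriminate].
Qed.

(* Expanding each rho-factor geometrically and each y by its gap turns the level sum into
   the double sum: the level reached at a letter is the sum of [d_j + 1] over the y's to its
   right. *)
Lemma bisum_eq_weight_sum q K w : pi_free w = true -> forall a N, (1 + K * count_y w <= N)%nat ->
  bisum q K w a 0 = sumC (fun k => Cmult (Cpow q (a * k)) (weight q (Some K) (Some K) w k)) N.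
Proof.
  induction w as [|x w IH]; intros Hw a N HN; simpl.
  - destruct N as [|N]; [simpl in HN; lia|]. rewrite sumC_S_l.
    rewrite (sumC_ext _ (fun _ => RtoC 0)) by (intros; simpl; ring).
    rewrite sumC_0, Nat.mul_0_r. simpl. ring.
  - destruct x; simpl in Hw; try discriminate.
    + erewrite sumC_ext
        by (intros m _; rewrite (IH Hw (a + S m)%nat N) by (simpl in HN; lia);
            now rewrite Cmult_1_l).
      rewrite sumC_exchange. apply sumC_ext. intros k _. simpl rho_fac.
      rewrite <- sumC_mult_r, <- sumC_mult_l. apply sumC_ext. intros m _.
      rewrite !Cmult_assoc, <- Cpow_add_r. do 2 f_equal. nia.
    + set (g := fun d j => Cmult (Cpow q (a * (j + S d))%nat) (weight q (Some K) (Some K) w j)).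
      transitivity (sumC (fun k => sumC (fun d =>
                      if (d <? K)%nat then g d (k - 1 - d)%nat else RtoC 0) k) N).
      * rewrite sumC_triangle. unfold g. apply sumC_ext. intros d Hd.
        rewrite (IH Hw a (N - 1 - d)%nat) by (simpl in HN; nia).
        rewrite <- sumC_mult_l. apply sumC_ext. intros j _.
        rewrite Cmult_assoc, <- Cpow_add_r. do 2 f_equal. nia.
      * apply sumC_ext. intros k _. rewrite <- sumC_mult_l. apply sumC_ext. intros d Hd.
        unfold g. destruct (d <? K)%nat; [|ring].
        now replace (k - 1 - d + S d)%nat with k by lia.
Qed.

Lemma rbisum_eq_rweight_sum r K w : pi_free w = true -> forall N, (1 + K * count_y w <= N)%nat ->
  rbisum r K w 0 0 = sumR (fun k => rweight r (Some K) (Some K) w k) N.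
Proof.
  intros Hw N HN. apply RtoC_inj.
  rewrite <- RtoC_rbisum, (bisum_eq_weight_sum _ K w Hw 0 N HN), RtoC_sumR.
  apply sumC_ext. intros. simpl. rewrite RtoC_rweight. ring.
Qed.

Lemma pow_le_antimono r a b : 0 <= r <= 1 -> (a <= b)%nat -> r ^ b <= r ^ a.
Proof.
  intros Hr Hab. induction Hab as [|b Hab IH]. lra.
  simpl. pose proof (pow_le r b (proj1 Hr)). nra.
Qed.

Section BisumBound.
Variable r : R.
Hypothesis (Hr0 : 0 <= r) (Hr1 : r < 1).

Lemma one_le_inv_one_sub : 1 <= / (1 - r).
Proof. rewrite <- Rinv_1. apply Rinv_le_contravar; lra. Qed.

Lemma geom_sum_le K : sumR (fun m => r ^ m) K <= / (1 - r).
Proof.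
  assert (E : (1 - r) * sumR (fun m => r ^ m) K = 1 - r ^ K).
  { induction K as [|K IH]. simpl. ring. rewrite sumR_S, Rmult_plus_distr_l, IH. simpl. ring. }
  pose proof (pow_le r K Hr0).
  apply Rmult_le_reg_l with (1 - r). lra. rewrite E, Rinv_r by lra. lra.
Qed.

Lemma geom_sum_mult_le K c : (1 <= c)%nat -> sumR (fun m => r ^ (c * S m)) K <= / (1 - r).
Proof.
  intros Hc. eapply Rle_trans; [|apply (geom_sum_le K)].
  apply sumR_le. intros. apply pow_le_antimono. lra. nia.
Qed.

Lemma rbisum_nonneg K w : forall a b, 0 <= rbisum r K w a b.
Proof.
  induction w as [|x w IH]; intros; simpl. lra.
  destruct x; auto; apply sumR_nonneg; intros; apply Rmult_le_pos; auto; apply pow_le; lra.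
Qed.

(* Once [a, b >= 1], every geometric sum is bounded by 1/(1-r). *)
Lemma rbisum_le K w : forall a b, (1 <= a)%nat -> (1 <= b)%nat ->
  rbisum r K w a b <= (/ (1 - r)) ^ (length w).
Proof.
  pose proof one_le_inv_one_sub as HG. set (G := / (1 - r)) in *.
  induction w as [|x w IH]; intros a b Ha Hb; simpl. lra.
  assert (0 <= G ^ length w) by (apply pow_le; lra).
  destruct x.
  - specialize (IH a b Ha Hb). nra.
  - apply Rle_trans with (sumR (fun m => G ^ length w * r ^ (b * S m)) K).
    + apply sumR_le. intros. rewrite Rmult_comm.
      apply Rmult_le_compat_r. apply pow_le; lra. apply IH; lia.
    + rewrite sumR_mult_l, Rmult_comm. apply Rmult_le_compat_r; auto. now apply geom_sum_mult_le.
  - apply Rle_trans with (sumR (fun m => G ^ length w * r ^ (a * S m)) K).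
    + apply sumR_le. intros. rewrite Rmult_comm.
      apply Rmult_le_compat_r. apply pow_le; lra. apply IH; lia.
    + rewrite sumR_mult_l, Rmult_comm. apply Rmult_le_compat_r; auto. now apply geom_sum_mult_le.
Qed.

(* The first rho and the last y start from [a = b = 0]; their pair contributes
   r^((m+1)(d+1)) <= r^m r^d. *)
Lemma rbisum_rho_y_le K u :
  rbisum r K (Srho :: u ++ [Sy]) 0 0 <= (/ (1 - r)) ^ (length u + 2).
Proof.
  pose proof one_le_inv_one_sub as HG. set (G := / (1 - r)) in *.
  assert (HX : 0 <= G ^ length u) by (apply pow_le; lra).
  assert (Hgeom : sumR (pow r) K <= G) by apply geom_sum_le.
  assert (HS : 0 <= sumR (pow r) K) by (apply sumR_nonneg; intros; apply pow_le; lra).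
  apply Rle_trans with (sumR (fun m => sumR (pow r) K * G ^ length u * r ^ m) K).
  - simpl rbisum. apply sumR_le. intros m _. rewrite Rmult_1_l, rbisum_snoc_y.
    apply Rle_trans with (sumR (fun d => G ^ length u * r ^ m * r ^ d) K);
      [|rewrite sumR_mult_l; apply Req_le; ring].
    apply sumR_le. intros d _.
    assert (r ^ (S m * S d) <= r ^ m * r ^ d)
      by (rewrite <- pow_add; apply pow_le_antimono; [lra|nia]).
    assert (rbisum r K u (S m) (S d) <= G ^ length u) by (apply rbisum_le; lia).
    pose proof (pow_le r (S m * S d) Hr0). pose proof (rbisum_nonneg K u (S m) (S d)).
    simpl Nat.add. nra.
  - rewrite sumR_mult_l. replace (length u + 2)%nat with (length u + 1 + 1)%nat by lia.
    rewrite !pow_add, pow_1.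
    apply Rle_trans with (G * G ^ length u * G); [|right; ring].
    apply Rmult_le_compat; [nra|auto|nra|auto].
Qed.

End BisumBound.

(** * Convergence of the level sums *)

Definition rho_y_word (u : list sym) : list sym := Srho :: u ++ [Sy].

Definition level_sum (q : C) (u : list sym) (N : nat) : C :=
  sumC (weight q None None (rho_y_word u)) N.

Definition bisum_seq (q : C) (u : list sym) (K : nat) : C :=
  bisum q K (rho_y_word u) 0 0.

Lemma filterlim_eventually_ge (phi : nat -> nat) :
  (forall n, (n <= phi n)%nat) -> filterlim phi eventually eventually.
Proof. intros H P [N HN]. exists N. intros n Hn. apply HN. specialize (H n). lia. Qed.

Section LevelSumLimit.
Variable q : C.
Hypothesis Hq : Cmod q < 1.
Variable u : list sym.
Hypothesis Hu : pi_free u = true.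

Local Notation r := (Cmod q).
Local Notation w := (rho_y_word u).

Let rlevel_sum N := sumR (rweight r None None w) N.
Let rbisum_seq K := rbisum r K w 0 0.
(* Each y lowers the level by at most [K], so cut weights vanish from level [cutoff K] on. *)
Let cutoff K := (1 + K * count_y w)%nat.

Let Hw : nil_or_y_final w = true := nil_or_y_final_snoc Srho u.

Lemma rho_y_word_pi_free : pi_free w = true.
Proof. simpl. now apply pi_free_app. Qed.

Lemma le_cutoff K : (K <= cutoff K)%nat.
Proof.
  assert (H : forall v, (1 <= count_y (v ++ [Sy]))%nat).
  { induction v as [|x v IH]; simpl; [lia|destruct x; simpl; lia]. }
  specialize (H u). unfold cutoff. simpl. nia.
Qed.

Lemma majorized_level_sum N N' : (N <= N')%nat ->
  majorized (level_sum q u N) (level_sum q u N') (rlevel_sum N) (rlevel_sum N').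
Proof.
  intros H. apply majorized_sum_longer; auto.
  - intros. apply majorized_weight; auto using trunc_le_refl.
  - intros. eapply majorized_bound_r.
    apply (majorized_weight q w Hq Hw None None None None); apply trunc_le_refl.
Qed.

Lemma bisum_seq_majorized K :
  majorized (bisum_seq q u K) (level_sum q u (cutoff K)) (rbisum_seq K) (rlevel_sum (cutoff K)).
Proof.
  unfold bisum_seq, rbisum_seq.
  rewrite (bisum_eq_weight_sum q K w rho_y_word_pi_free 0 (cutoff K)) by (unfold cutoff; lia).
  rewrite (rbisum_eq_rweight_sum r K w rho_y_word_pi_free (cutoff K)) by (unfold cutoff; lia).
  apply majorized_sum. intros k _. rewrite Nat.mul_0_l, Cmult_1_l.
  apply majorized_weight; auto; simpl; auto.
Qed.

Lemma rbisum_seq_incr K : rbisum_seq K <= rbisum_seq (S K).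
Proof.
  unfold rbisum_seq.
  rewrite !(rbisum_eq_rweight_sum r _ w rho_y_word_pi_free (cutoff (S K))) by (unfold cutoff; nia).
  assert (H : majorized
    (sumC (weight q (Some K) (Some K) w) (cutoff (S K)))
    (sumC (weight q (Some (S K)) (Some (S K)) w) (cutoff (S K)))
    (sumR (rweight r (Some K) (Some K) w) (cutoff (S K)))
    (sumR (rweight r (Some (S K)) (Some (S K)) w) (cutoff (S K)))).
  { apply majorized_sum. intros. apply majorized_weight; auto; simpl; auto. }
  apply H.
Qed.

Let L := real (Lim_seq rbisum_seq).

Lemma is_lim_seq_rbisum_seq : is_lim_seq rbisum_seq L.
Proof.
  assert (H : ex_finite_lim_seq rbisum_seq).
  { apply (ex_finite_lim_seq_incr _ ((/ (1 - r)) ^ (length u + 2))).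
    - apply rbisum_seq_incr.
    - intros K. apply rbisum_rho_y_le; [apply Cmod_ge_0|exact Hq]. }
  destruct H as [l Hl]. unfold L. now rewrite (is_lim_seq_unique _ _ Hl).
Qed.

Lemma rlevel_sum_le N : rlevel_sum N <= L.
Proof.
  assert (Hlim : is_lim_seq (fun K => sumR (rweight r (Some K) None w) N) (rlevel_sum N)).
  { apply (is_lim_seq_sumR (fun K => rweight r (Some K) None w)). intros.
    apply is_lim_seq_rweight; auto using Cmod_ge_0. }
  assert (H : Rbar_le (rlevel_sum N) L).
  { apply (is_lim_seq_le_loc (fun K => sumR (rweight r (Some K) None w) N) (fun _ => L));
      [|exact Hlim|apply is_lim_seq_const].
    exists N. intros K HK.
    eapply Rle_trans;
      [|apply (is_lim_seq_incr_compare _ _ is_lim_seq_rbisum_seq rbisum_seq_incr K)].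
    unfold rbisum_seq.
    rewrite (rbisum_eq_rweight_sum r K w rho_y_word_pi_free (cutoff K)) by (unfold cutoff; lia).
    rewrite (sumR_ext _ (rweight r (Some K) (Some K) w))
      by (intros; symmetry; apply rweight_gap_trunc; lia).
    apply sumR_mono. pose proof (le_cutoff K). lia.
    intros. now apply rweight_nonneg. }
  exact H.
Qed.

(* The truncated double sums are squeezed between partial level sums at [r]. *)
Lemma is_lim_seq_rlevel_sum : is_lim_seq rlevel_sum L.
Proof.
  assert (Hincr : forall N, rlevel_sum N <= rlevel_sum (S N))
    by (intros N; apply (majorized_level_sum N (S N)); lia).
  destruct (ex_finite_lim_seq_incr rlevel_sum L Hincr rlevel_sum_le) as [l Hl].
  assert (Hle : Rbar_le l L)
    by (apply (is_lim_seq_le rlevel_sum (fun _ => L) l L);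
         auto using rlevel_sum_le, is_lim_seq_const).
  assert (Hge : Rbar_le L l).
  { apply (is_lim_seq_le rbisum_seq (fun K => rlevel_sum (cutoff K))).
    - intros K. apply bisum_seq_majorized.
    - apply is_lim_seq_rbisum_seq.
    - apply is_lim_seq_subseq; auto. apply filterlim_eventually_ge, le_cutoff. }
  simpl in Hle, Hge. now replace L with l by lra.
Qed.

(* [pr] stands for [Re] or [Im], since [climit] is taken componentwise. *)
Variable pr : C -> R.
Hypothesis Hpr_le : forall z, Rabs (pr z) <= Cmod z.
Hypothesis Hpr_minus : forall a b, pr (Cminus a b) = pr a - pr b.

Lemma Rabs_pr_minus_le a b A B : majorized a b A B -> Rabs (pr b - pr a) <= B - A.
Proof. intros [H _]. rewrite <- Hpr_minus. eapply Rle_trans. apply Hpr_le. exact H. Qed.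

Lemma ex_finite_lim_pr_level_sum_pi_free : ex_finite_lim_seq (fun N => pr (level_sum q u N)).
Proof.
  apply ex_lim_seq_cauchy_corr. intros eps.
  assert (Hc : ex_lim_seq_cauchy rlevel_sum)
    by (apply ex_lim_seq_cauchy_corr; exists L; apply is_lim_seq_rlevel_sum).
  destruct (Hc eps) as [N HN]. exists N. intros n m Hn Hm.
  specialize (HN n m Hn Hm).
  destruct (le_lt_dec m n) as [H|H].
  - pose proof (majorized_level_sum m n H) as D. pose proof (proj2 (proj2 D)).
    pose proof (Rabs_pr_minus_le _ _ _ _ D). rewrite Rabs_pos_eq in HN; lra.
  - pose proof (majorized_level_sum n m ltac:(lia)) as D. pose proof (proj2 (proj2 D)).
    pose proof (Rabs_pr_minus_le _ _ _ _ D). rewrite Rabs_minus_sym. rewrite Rabs_left1 in HN; lra.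
Qed.

Lemma Lim_seq_pr_bisum_seq :
  Lim_seq (fun K => pr (bisum_seq q u K)) = Lim_seq (fun N => pr (level_sum q u N)).
Proof.
  destruct ex_finite_lim_pr_level_sum_pi_free as [l Hl].
  rewrite (is_lim_seq_unique _ _ Hl). apply is_lim_seq_unique.
  assert (Hcut : filterlim cutoff eventually eventually)
    by (apply filterlim_eventually_ge, le_cutoff).
  assert (Hgap : is_lim_seq (fun K => rlevel_sum (cutoff K) - rbisum_seq K) 0).
  { replace 0 with (L - L) by ring. apply is_lim_seq_minus'.
    - apply (is_lim_seq_subseq rlevel_sum); auto using is_lim_seq_rlevel_sum.
    - apply is_lim_seq_rbisum_seq. }
  apply is_lim_seq_ext
    with (fun K => pr (level_sum q u (cutoff K))
                    + (pr (bisum_seq q u K) - pr (level_sum q u (cutoff K)))).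
  { intros; ring. }
  replace (Finite l) with (Finite (l + 0)) by (f_equal; ring).
  apply is_lim_seq_plus'; [now apply (is_lim_seq_subseq (fun N => pr (level_sum q u N)))|].
  apply is_lim_seq_le_le with (fun K => - (rlevel_sum (cutoff K) - rbisum_seq K))
                              (fun K => rlevel_sum (cutoff K) - rbisum_seq K); auto.
  - intros K. pose proof (Rabs_pr_minus_le _ _ _ _ (bisum_seq_majorized K)) as H.
    rewrite Rabs_minus_sym in H. apply Rabs_le_between in H. lra.
  - replace (Finite 0) with (Rbar_opp 0) by (simpl; f_equal; ring).
    apply -> is_lim_seq_opp. exact Hgap.
Qed.

End LevelSumLimit.

Lemma im_le_Cmod z : Rabs (Im z) <= Cmod z.
Proof.
  destruct z as [x y]. unfold Cmod, Im. simpl. rewrite <- sqrt_Rsqr_abs.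
  apply sqrt_le_1_alt. unfold Rsqr. nra.
Qed.

Definition ex_climit (s : nat -> C) : Prop :=
  ex_finite_lim_seq (fun N => Re (s N)) /\ ex_finite_lim_seq (fun N => Im (s N)).

Fixpoint count_pi (w : list sym) : nat :=
  match w with [] => O | Spi :: w' => S (count_pi w') | _ :: w' => count_pi w' end.

Lemma count_pi_app u v : count_pi (u ++ v) = (count_pi u + count_pi v)%nat.
Proof. induction u as [|x u IH]; simpl; auto. destruct x; simpl; lia. Qed.

Lemma split_at_pi u : pi_free u = false -> exists u1 u2, u = u1 ++ Spi :: u2.
Proof.
  induction u as [|x u IH]; simpl; intros H; [discriminate|].
  destruct x.
  - now exists [], u.
  - destruct (IH H) as (u1 & u2 & ->). now exists (Srho :: u1), u2.
  - destruct (IH H) as (u1 & u2 & ->). now exists (Sy :: u1), u2.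
Qed.

Lemma level_sum_split_pi q u1 u2 N :
  level_sum q (u1 ++ Spi :: u2) N
   = Cplus (level_sum q (u1 ++ u2) N) (level_sum q (u1 ++ Srho :: u2) N).
Proof.
  unfold level_sum, rho_y_word. rewrite <- sumC_add. apply sumC_ext. intros k _.
  rewrite <- !app_assoc. exact (weight_split_pi q None None (Srho :: u1) (u2 ++ [Sy]) k).
Qed.

Section AnyWord.
Variable q : C.
Hypothesis Hq : Cmod q < 1.

(* Each pi splits into 1 + rho, reducing to pi-free words. *)
Lemma ex_finite_lim_pr_level_sum (pr : C -> R) :
  (forall z, Rabs (pr z) <= Cmod z) -> (forall a b, pr (Cminus a b) = pr a - pr b) ->
  (forall a b, pr (Cplus a b) = pr a + pr b) ->
  forall u, ex_finite_lim_seq (fun N => pr (level_sum q u N)).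
Proof.
  intros Hle Hminus Hplus.
  assert (H : forall n u, (count_pi u <= n)%nat ->
                           ex_finite_lim_seq (fun N => pr (level_sum q u N))).
  { induction n as [|n IH]; intros u Hu.
    all: destruct (pi_free u) eqn:E; [now apply ex_finite_lim_pr_level_sum_pi_free|].
    all: destruct (split_at_pi u E) as (u1 & u2 & ->).
    all: rewrite count_pi_app in Hu; simpl in Hu.
    { lia. }
    destruct (IH (u1 ++ u2)) as [l1 H1]; [rewrite count_pi_app; lia|].
    destruct (IH (u1 ++ Srho :: u2)) as [l2 H2]; [rewrite count_pi_app; simpl; lia|].
    exists (l1 + l2). apply is_lim_seq_ext with (fun N => pr (level_sum q (u1 ++ u2) N)
                                                      + pr (level_sum q (u1 ++ Srho :: u2) N)).
    - intros N. now rewrite level_sum_split_pi, Hplus.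
    - now apply is_lim_seq_plus'. }
  intros u. now apply (H (count_pi u)).
Qed.

Lemma ex_climit_level_sum u : ex_climit (level_sum q u).
Proof.
  split; apply ex_finite_lim_pr_level_sum; auto using re_le_Cmod, im_le_Cmod;
    intros; unfold Re, Im; simpl; ring.
Qed.

Lemma climit_level_sum_eq_bisum u :
  pi_free u = true -> climit (level_sum q u) = climit (bisum_seq q u).
Proof.
  intros Hu. unfold climit.
  rewrite (Lim_seq_pr_bisum_seq q Hq u Hu Re), (Lim_seq_pr_bisum_seq q Hq u Hu Im);
    auto using re_le_Cmod, im_le_Cmod.
Qed.

End AnyWord.

(** * Evaluating noncommutative polynomials at a level *)

Definition nc_lin (E : ncpoly) (f : word -> C) : C :=
  fold_right (fun p acc => Cplus (Cmult (RtoC (Q2R (fst p))) (f (snd p))) acc) (RtoC 0) E.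

Lemma nc_lin_cons p E f :
  nc_lin (p :: E) f = Cplus (Cmult (RtoC (Q2R (fst p))) (f (snd p))) (nc_lin E f).
Proof. reflexivity. Qed.

Lemma nc_lin_app E1 E2 f : nc_lin (E1 ++ E2) f = Cplus (nc_lin E1 f) (nc_lin E2 f).
Proof. induction E1 as [|p E1 IH]; simpl. ring. rewrite IH. ring. Qed.

Lemma nc_lin_ext_in E f g : (forall p, In p E -> f (snd p) = g (snd p)) -> nc_lin E f = nc_lin E g.
Proof. induction E as [|p E IH]; simpl; intros H; auto. rewrite H, IH; auto. Qed.

Lemma nc_lin_ext E f g : (forall w, f w = g w) -> nc_lin E f = nc_lin E g.
Proof. intros H. apply nc_lin_ext_in. auto. Qed.

Lemma nc_lin_mult_l E c f : nc_lin E (fun w => Cmult c (f w)) = Cmult c (nc_lin E f).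
Proof. induction E as [|p E IH]; simpl. ring. rewrite IH. ring. Qed.

Lemma nc_lin_sumC E (f : word -> nat -> C) n :
  nc_lin E (fun w => sumC (f w) n) = sumC (fun k => nc_lin E (fun w => f w k)) n.
Proof.
  induction E as [|p E IH]; simpl. now rewrite sumC_0.
  now rewrite IH, <- sumC_mult_l, <- sumC_add.
Qed.

Lemma nc_lin_prefix B c w f :
  nc_lin (map (fun r => (c * fst r, w ++ snd r)%Q) B) f
  = Cmult (RtoC (Q2R c)) (nc_lin B (fun v => f (w ++ v))).
Proof.
  induction B as [|p B IH]; simpl. ring.
  rewrite IH, Q2R_mult, RtoC_mult. unfold word. ring.
Qed.

Lemma nc_lin_mul A B f : nc_lin (nc_mul A B) f = nc_lin A (fun w => nc_lin B (fun v => f (w ++ v))).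
Proof.
  induction A as [|p A IH]; auto. unfold nc_mul in *. simpl.
  now rewrite nc_lin_app, IH, nc_lin_prefix.
Qed.

Lemma Q2R_1 : Q2R 1 = 1.
Proof. unfold Q2R. simpl. field. Qed.

Lemma nc_pow_y b : nc_pow nc_y b = [(1%Q, repeat Yl b)].
Proof. induction b as [|b IH]; simpl; auto. now rewrite IH. Qed.

Definition sym_of_letter (x : letter) : sym := match x with Pi => Spi | Yl => Sy end.

Definition word_weight (q : C) (w : word) (k : nat) : C :=
  weight q None None (map sym_of_letter w) k.

Definition nc_weight (q : C) (E : ncpoly) (k : nat) : C := nc_lin E (fun w => word_weight q w k).

Definition drop_lead_pi (w : word) : word := skipn (lead_pi w) w.

Definition nc_weight_stripped (q : C) (E : ncpoly) (k : nat) : C :=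
  nc_lin E (fun w => word_weight q (drop_lead_pi w) k).

Lemma lead_pi_decomp w : w = repeat Pi (lead_pi w) ++ drop_lead_pi w.
Proof.
  induction w as [|x w IH]; simpl; auto.
  destruct x; simpl; auto. unfold drop_lead_pi in *. simpl. now f_equal.
Qed.

Lemma drop_lead_pi_repeat n v : drop_lead_pi (repeat Pi n ++ v) = drop_lead_pi v.
Proof. induction n; simpl; auto. Qed.

Lemma word_weight_repeat_pi q n v k :
  word_weight q (repeat Pi n ++ v) k = Cmult (Cpow (xfac q k) n) (word_weight q v k).
Proof.
  induction n as [|n IH]; simpl. ring.
  unfold word_weight in *. simpl. rewrite IH. unfold rho_fac, tfac. ring.
Qed.

Lemma word_weight_y q v k : word_weight q (Yl :: v) k = sumC (word_weight q v) k.
Proof. unfold word_weight. simpl. now rewrite (sumC_rev (fun i => weight q None None _ i)). Qed.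

Lemma weight_repeat_rho q Kt Kd n w k :
  weight q Kt Kd (repeat Srho n ++ w) k = Cmult (Cpow (rho_fac q Kt k) n) (weight q Kt Kd w k).
Proof. induction n as [|n IH]; simpl. ring. rewrite IH. ring. Qed.

Definition pi_only (E : ncpoly) : Prop :=
  List.Forall (fun p => snd p = repeat Pi (length (snd p))) E.

Definition pi_eval (E : ncpoly) (z : C) : C := nc_lin E (fun w => Cpow z (length w)).

Lemma pi_only_mul A B : pi_only A -> pi_only B -> pi_only (nc_mul A B).
Proof.
  unfold pi_only, nc_mul. intros HA HB. induction HA as [|p A Hp HA IH]; simpl; auto.
  apply List.Forall_app. split; auto. clear IH HA.
  induction HB as [|p' B Hp' HB IH]; simpl; constructor; auto.
  simpl. now rewrite Hp, Hp', <- repeat_app, repeat_length.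
Qed.

Lemma pi_only_rho : pi_only nc_rho.
Proof. repeat constructor. Qed.

Lemma pi_only_pow P n : pi_only P -> pi_only (nc_pow P n).
Proof. intros H. induction n; simpl. repeat constructor. now apply pi_only_mul. Qed.

Lemma pi_eval_mul A B z : pi_eval (nc_mul A B) z = Cmult (pi_eval A z) (pi_eval B z).
Proof.
  unfold pi_eval. rewrite nc_lin_mul, Cmult_comm, <- nc_lin_mult_l. apply nc_lin_ext. intros w.
  rewrite Cmult_comm, <- nc_lin_mult_l. apply nc_lin_ext. intros v.
  rewrite length_app, Cpow_add_r. ring.
Qed.

Lemma pi_eval_pow P n z : pi_eval (nc_pow P n) z = Cpow (pi_eval P z) n.
Proof.
  induction n as [|n IH]; simpl.
  - unfold pi_eval. simpl. rewrite Q2R_1. ring.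
  - now rewrite pi_eval_mul, IH.
Qed.

Lemma pi_eval_rho z : pi_eval nc_rho z = Cminus z (RtoC 1).
Proof.
  unfold pi_eval. simpl. rewrite Q2R_1.
  replace (Q2R (-1 * 1)) with (-1) by (unfold Q2R; simpl; field). ring.
Qed.

Section LevelEvaluation.
Variable q : C.

Lemma nc_weight_pi_only_mul A B k : pi_only A ->
  nc_weight q (nc_mul A B) k = Cmult (pi_eval A (xfac q k)) (nc_weight q B k).
Proof.
  intros HA. unfold nc_weight, pi_eval. rewrite nc_lin_mul, Cmult_comm, <- nc_lin_mult_l.
  apply nc_lin_ext_in. intros [c w] Hin.
  pose proof (proj1 (List.Forall_forall _ _) HA _ Hin) as Hw. simpl in *.
  set (n := length w) in *. rewrite Hw. rewrite Cmult_comm, <- nc_lin_mult_l.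
  apply nc_lin_ext. intros v. apply word_weight_repeat_pi.
Qed.

Lemma nc_weight_stripped_pi_only_mul A B k : pi_only A ->
  nc_weight_stripped q (nc_mul A B) k = Cmult (pi_eval A (RtoC 1)) (nc_weight_stripped q B k).
Proof.
  intros HA. unfold nc_weight_stripped, pi_eval. rewrite nc_lin_mul, Cmult_comm, <- nc_lin_mult_l.
  apply nc_lin_ext_in. intros [c w] Hin.
  pose proof (proj1 (List.Forall_forall _ _) HA _ Hin) as Hw. simpl in *.
  set (n := length w) in *. rewrite Hw, Cpow_1_l, Cmult_1_r.
  apply nc_lin_ext. intros v. now rewrite drop_lead_pi_repeat.
Qed.

Lemma nc_weight_y_pow_mul b B w : (forall k, nc_weight q B k = weight q None None w k) ->
  forall k, nc_weight q (nc_mul (nc_pow nc_y b) B) k = weight q None None (repeat Sy b ++ w) k.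
Proof.
  intros HB k. unfold nc_weight in *. rewrite nc_pow_y, nc_lin_mul. simpl. rewrite Q2R_1.
  replace (nc_lin B _) with (weight q None None (repeat Sy b ++ w) k); [ring|].
  revert k. induction b as [|b IH]; intros k; simpl; [symmetry; apply HB|].
  erewrite nc_lin_ext by (intros; apply word_weight_y).
  rewrite nc_lin_sumC, <- sumC_rev. apply sumC_ext. intros. apply IH.
Qed.

End LevelEvaluation.

Lemma repeat_app_cons {T} (x : T) n l : repeat x n ++ x :: l = x :: repeat x n ++ l.
Proof. now rewrite app_comm_cons, repeat_cons, <- app_assoc. Qed.

Lemma climit_ext (s t : nat -> C) : (forall n, s n = t n) -> climit s = climit t.
Proof.
  intros H. unfold climit.
  now rewrite (Lim_seq_ext _ _ (fun n => f_equal Re (H n))),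
              (Lim_seq_ext _ _ (fun n => f_equal Im (H n))).
Qed.

Lemma parse_aux_snoc_y v : forall cnt, exists a s, parse_aux (v ++ [Yl]) cnt = Some (a :: s).
Proof.
  induction v as [|x v IH]; intros cnt; simpl.
  - now exists cnt, [].
  - destruct x.
    + apply IH.
    + destruct (IH O) as (a & s & ->). now exists cnt, (a :: s).
Qed.

Section WordSeries.
Variable q : C.
Hypothesis Hq : Cmod q < 1.

Lemma inner_of_parse w : forall cnt s, parse_aux w cnt = Some s ->
  forall n, inner q s n = sumC (word_weight q (repeat Pi cnt ++ w)) (S n).
Proof.
  induction w as [|x w IH]; intros cnt s Hs n.
  - destruct cnt; simpl in Hs; inversion Hs; subst.
    rewrite sumC_S_l, (sumC_ext _ (fun _ => RtoC 0)), sumC_0 by reflexivity. cbn. ring.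
  - destruct x; simpl in Hs.
    + rewrite (IH _ _ Hs). now rewrite repeat_app_cons.
    + destruct (parse_aux w 0) as [s'|] eqn:E; inversion Hs; subst. simpl inner.
      rewrite sumC_S_l, word_weight_repeat_pi, word_weight_y. simpl sumC at 2.
      rewrite Cmult_0_r, Cplus_0_l. apply sumC_ext. intros k _.
      rewrite word_weight_repeat_pi, word_weight_y, (IH 0%nat s' E). simpl.
      unfold xfac. rewrite Cpow_inv by (apply one_sub_pow_neq_0; auto; lia). reflexivity.
Qed.

Lemma zIII_partial_of_parse w : forall cnt a s, parse_aux w cnt = Some (a :: s) -> forall N,
  zIII_partial q (S a :: s) N
  = sumC (weight q None None (Srho :: map sym_of_letter (repeat Pi cnt ++ w))) (S N).
Proof.
  induction w as [|x w IH]; intros cnt a s Hs N.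
  - destruct cnt; discriminate.
  - destruct x; simpl in Hs.
    + rewrite (IH _ _ _ Hs). now rewrite repeat_app_cons.
    + destruct (parse_aux w 0) as [s'|] eqn:E; inversion Hs; subst.
      unfold zIII_partial. rewrite sumC_S_l, weight_level_0, Cplus_0_l.
      2: { right. rewrite map_app. apply in_or_app. right. now left. }
      apply sumC_ext. intros k _.
      change (weight q None None (Srho :: ?v) (S k))
        with (Cmult (tfac q (S k)) (word_weight q (repeat Pi a ++ Yl :: w) (S k))).
      rewrite word_weight_repeat_pi, word_weight_y, (inner_of_parse w 0 _ E).
      pose proof (one_sub_pow_neq_0 q Hq (S k) ltac:(lia)) as Hz.
      unfold tfac, xfac. rewrite <- Cpow_inv by auto.
      set (z := Cminus (RtoC 1) (Cpow q (S k))) in *.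
      replace (Cpow q (S k)) with (Cminus (RtoC 1) z) by (unfold z; ring).
      rewrite Cpow_S. change (repeat Pi 0 ++ w) with w. field. auto.
Qed.

Lemma zword_eq_climit v :
  zword q (v ++ [Yl])
  = climit (fun N => sumC (weight q None None (Srho :: map sym_of_letter (v ++ [Yl]))) (S N)).
Proof.
  destruct (parse_aux_snoc_y v 0) as (a & s & Hs).
  unfold zword, parse. rewrite Hs. apply climit_ext. intros N.
  exact (zIII_partial_of_parse _ 0 a s Hs N).
Qed.

End WordSeries.

(** * z_q^III as a limit of level sums *)

Definition ends_y (w : word) : Prop := exists v, w = v ++ [Yl].
Definition all_ends_y (E : ncpoly) : Prop := List.Forall (fun p => ends_y (snd p)) E.

Lemma skipn_repeat_app {T} (x : T) j m v : (j <= m)%nat ->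
  skipn j (repeat x m ++ v) = repeat x (m - j) ++ v.
Proof.
  revert m. induction j as [|j IH]; intros m H; simpl. now rewrite Nat.sub_0_r.
  destruct m; [lia|]. apply IH. lia.
Qed.

Lemma ends_y_repeat_pi m s : ends_y (repeat Pi m ++ s) -> ends_y s.
Proof.
  induction m as [|m IH]; simpl; auto. intros [[|y v] E]; inversion E.
  apply IH. now exists v.
Qed.

Lemma ends_y_skipn_lead_pi w j : ends_y w -> (j <= lead_pi w)%nat -> ends_y (skipn j w).
Proof.
  intros Hw Hj. rewrite (lead_pi_decomp w) in Hw |- *. rewrite skipn_repeat_app by exact Hj.
  apply ends_y_repeat_pi in Hw. destruct Hw as [v ->].
  exists (repeat Pi (lead_pi w - j) ++ v). now rewrite <- app_assoc.
Qed.

Lemma all_ends_y_rho_inv E : all_ends_y E -> all_ends_y (rho_inv E).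
Proof.
  unfold all_ends_y, rho_inv. intros H. induction H as [|[c w] E Hp HE IH]; simpl; auto.
  apply List.Forall_app. split; auto.
  apply List.Forall_forall. intros p' Hin. apply in_map_iff in Hin.
  destruct Hin as (i & <- & Hi). apply in_seq in Hi.
  apply (ends_y_skipn_lead_pi w (S i)); auto. lia.
Qed.

Lemma nc_lin_map_seq c w (f : word -> C) m :
  nc_lin (map (fun k => (c, skipn (S k) w)) (seq 0 m)) f
  = Cmult (RtoC (Q2R c)) (sumC (fun i => f (skipn (S i) w)) m).
Proof.
  induction m as [|m IH]. simpl. ring.
  rewrite seq_S, map_app, nc_lin_app, IH. simpl. ring.
Qed.

Lemma geom_sum_desc x m :
  Cmult (Cminus x (RtoC 1)) (sumC (fun i => Cpow x (m - 1 - i)) m) = Cminus (Cpow x m) (RtoC 1).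
Proof.
  rewrite <- (sumC_rev (Cpow x)). induction m as [|m IH]. simpl. ring.
  rewrite sumC_S, Cmult_plus_distr_l, IH. simpl. ring.
Qed.

(* The entry [(c, pi^m v)] of [E] contributes [(x_k - 1)(1 + x_k + ... + x_k^(m-1)) = x_k^m - 1]
   times [c] times the weight of [v]. *)
Lemma nc_lin_rho_inv q E k :
  nc_lin (rho_inv E) (fun w => Cmult (tfac q k) (word_weight q w k))
  = Cminus (nc_weight q E k) (nc_weight_stripped q E k).
Proof.
  unfold rho_inv, nc_weight, nc_weight_stripped. induction E as [|[c w] E IH]. simpl. ring.
  cbn [flat_map fst snd]. rewrite nc_lin_app, IH, nc_lin_map_seq, !nc_lin_cons. cbn [fst snd].
  set (m := lead_pi w). set (F := word_weight q (drop_lead_pi w) k).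
  rewrite (sumC_ext _ (fun i => Cmult (Cpow (xfac q k) (m - 1 - i)) (Cmult (tfac q k) F))).
  2: { intros i Hi. rewrite (lead_pi_decomp w) at 1. fold m.
       rewrite skipn_repeat_app, word_weight_repeat_pi by lia. unfold F.
       replace (m - S i)%nat with (m - 1 - i)%nat by lia. ring. }
  rewrite sumC_mult_r, (lead_pi_decomp w) at 1. fold m.
  rewrite word_weight_repeat_pi. fold F.
  replace (Cmult (Cpow (xfac q k) m) F)
    with (Cplus (Cmult (Cminus (Cpow (xfac q k) m) (RtoC 1)) F) F) by ring.
  rewrite <- (geom_sum_desc (xfac q k) m). unfold tfac. ring.
Qed.

Lemma climit_is_lim (s : nat -> C) (a b : R) :
  is_lim_seq (fun N => Re (s N)) a -> is_lim_seq (fun N => Im (s N)) b -> climit s = (a, b).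
Proof.
  intros H1 H2. unfold climit. now rewrite (is_lim_seq_unique _ _ H1), (is_lim_seq_unique _ _ H2).
Qed.

Lemma climit_shift (s : nat -> C) : climit (fun N => s (S N)) = climit s.
Proof.
  unfold climit.
  now rewrite (Lim_seq_incr_1 (fun N => Re (s N))), (Lim_seq_incr_1 (fun N => Im (s N))).
Qed.

Lemma climit_nc_lin (E : ncpoly) (f : word -> nat -> C) :
  (forall p, In p E -> ex_climit (f (snd p))) ->
  ex_climit (fun N => nc_lin E (fun w => f w N))
  /\ climit (fun N => nc_lin E (fun w => f w N)) = nc_lin E (fun w => climit (f w)).
Proof.
  induction E as [|p E IH]; intros H.
  - split. split; exists 0; apply is_lim_seq_const.
    now rewrite (climit_is_lim _ 0 0) by apply is_lim_seq_const.
  - destruct IH as [[[a1 Ha1] [b1 Hb1]] E1]; [intros; apply H; simpl; auto|].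
    destruct (H p (or_introl eq_refl)) as [[a2 Ha2] [b2 Hb2]].
    set (c := Q2R (fst p)).
    assert (LR : is_lim_seq (fun N => Re (nc_lin (p :: E) (fun w => f w N))) (c * a2 + a1)).
    { apply is_lim_seq_ext with (fun N => c * Re (f (snd p) N) + Re (nc_lin E (fun w => f w N))).
      - intros N. simpl. unfold c, Re, Im. ring.
      - apply is_lim_seq_plus'; auto. apply is_lim_seq_mult'; auto. apply is_lim_seq_const. }
    assert (LI : is_lim_seq (fun N => Im (nc_lin (p :: E) (fun w => f w N))) (c * b2 + b1)).
    { apply is_lim_seq_ext with (fun N => c * Im (f (snd p) N) + Im (nc_lin E (fun w => f w N))).
      - intros N. simpl. unfold c, Re, Im. ring.
      - apply is_lim_seq_plus'; auto. apply is_lim_seq_mult'; auto. apply is_lim_seq_const. }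
    split; [split; eexists; eauto|].
    rewrite (climit_is_lim _ _ _ LR LI), nc_lin_cons, <- E1.
    rewrite (climit_is_lim _ _ _ Ha1 Hb1), (climit_is_lim _ _ _ Ha2 Hb2). fold c.
    apply injective_projections; simpl; ring.
Qed.

Lemma zIII_eq_climit_level_sum q E u : Cmod q < 1 -> all_ends_y E ->
  (forall k, Cminus (nc_weight q E k) (nc_weight_stripped q E k)
             = weight q None None (rho_y_word u) k) ->
  zIII q E = climit (level_sum q u).
Proof.
  intros Hq HE HX.
  set (f := fun w N => sumC (weight q None None (Srho :: map sym_of_letter w)) (S N)).
  assert (Hends := all_ends_y_rho_inv E HE).
  assert (Hconv : forall p, In p (rho_inv E) -> ex_climit (f (snd p))).
  { intros p Hp. destruct (proj1 (List.Forall_forall _ _) Hends p Hp) as [v ->].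
    destruct (ex_climit_level_sum q Hq (map sym_of_letter v)) as [[a Ha] [b Hb]].
    unfold f. rewrite map_app.
    split; [exists a|exists b]; now apply (is_lim_seq_incr_1 (fun N => _ (level_sum q _ N))). }
  change (zIII q E) with (nc_lin (rho_inv E) (zword q)).
  rewrite (nc_lin_ext_in _ _ (fun w => climit (f w))).
  2: { intros p Hp. destruct (proj1 (List.Forall_forall _ _) Hends p Hp) as [v ->].
       now apply zword_eq_climit. }
  rewrite <- (proj2 (climit_nc_lin _ _ Hconv)), <- (climit_shift (level_sum q u)).
  apply climit_ext. intros N. unfold f, level_sum.
  rewrite nc_lin_sumC. apply sumC_ext. intros k _.
  now rewrite <- HX, <- nc_lin_rho_inv.
Qed.

(** * Blocks of rho's and y's *)

Definition nc_blocks (a b : nat -> nat) (js : list nat) : ncpoly :=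
  nc_prod (flat_map (fun j => [nc_pow (nc_sub nc_pi nc_one) (a j); nc_pow nc_y (b j)]) js).

Definition blocks (a b : nat -> nat) (js : list nat) : list sym :=
  flat_map (fun j => repeat Srho (a j) ++ repeat Sy (b j)) js.

Definition all_nil_or_ends_y (E : ncpoly) : Prop :=
  List.Forall (fun p => snd p = [] \/ ends_y (snd p)) E.

Lemma all_ends_y_mul A B : all_ends_y B -> all_ends_y (nc_mul A B).
Proof.
  unfold all_ends_y, nc_mul. intros HB. induction A as [|p A IH]; simpl; auto.
  apply List.Forall_app. split; auto. clear IH.
  induction HB as [|p' B [v Ev] HB IH]; simpl; constructor; auto.
  exists (snd p ++ v). simpl. unfold word in *. now rewrite Ev, app_assoc.
Qed.

Lemma all_ends_y_y_pow_mul b B : (1 <= b)%nat -> all_nil_or_ends_y B ->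
  all_ends_y (nc_mul (nc_pow nc_y b) B).
Proof.
  intros Hb HB. rewrite nc_pow_y. unfold all_ends_y, all_nil_or_ends_y, nc_mul in *.
  simpl. rewrite app_nil_r.
  induction HB as [|p B Hp HB IH]; simpl; constructor; auto. simpl. unfold word in *.
  destruct Hp as [-> | [v ->]].
  - destruct b as [|b]; [lia|]. exists (repeat Yl b). rewrite app_nil_r. apply repeat_cons.
  - exists (repeat Yl b ++ v). now rewrite app_assoc.
Qed.

Lemma all_nil_or_ends_y_nc_blocks a b js : (forall j, In j js -> (1 <= b j)%nat) ->
  all_nil_or_ends_y (nc_blocks a b js).
Proof.
  induction js as [|j js IH]; intros H. repeat constructor; auto.
  change (nc_blocks a b (j :: js))
    with (nc_mul (nc_pow (nc_sub nc_pi nc_one) (a j))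
             (nc_mul (nc_pow nc_y (b j)) (nc_blocks a b js))).
  apply List.Forall_impl with (fun p => ends_y (snd p)); auto.
  apply all_ends_y_mul, all_ends_y_y_pow_mul; [apply H; now left|].
  apply IH. intros. apply H. now right.
Qed.

Lemma pi_eval_rho_pow n z : pi_eval (nc_pow (nc_sub nc_pi nc_one) n) z = Cpow (Cminus z (RtoC 1)) n.
Proof. rewrite pi_eval_pow. f_equal. apply pi_eval_rho. Qed.

Section BlockWeights.
Variable q : C.

Lemma nc_weight_nc_blocks a b js k :
  nc_weight q (nc_blocks a b js) k = weight q None None (blocks a b js) k.
Proof.
  revert k. induction js as [|j js IH]; intros k.
  - unfold nc_weight, word_weight. simpl. rewrite Q2R_1. ring.
  - change (nc_blocks a b (j :: js)) with (nc_mul (nc_pow (nc_sub nc_pi nc_one) (a j))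
      (nc_mul (nc_pow nc_y (b j)) (nc_blocks a b js))).
    rewrite nc_weight_pi_only_mul by (apply pi_only_pow, pi_only_rho).
    rewrite pi_eval_rho_pow, (nc_weight_y_pow_mul q (b j) _ _ IH k).
    unfold blocks. simpl flat_map. rewrite <- app_assoc, weight_repeat_rho. reflexivity.
Qed.

(* The factor rho vanishes at pi = 1, killing the stripped weight. *)
Lemma nc_weight_head_block a1 b1 R w : (1 <= a1)%nat ->
  (forall k, nc_weight q R k = weight q None None w k) ->
  forall k, Cminus (nc_weight q (nc_mul (nc_pow (nc_sub nc_pi nc_one) (a1 - 1))
                                   (nc_mul nc_rho (nc_mul (nc_pow nc_y b1) R))) k)
                   (nc_weight_stripped q (nc_mul (nc_pow (nc_sub nc_pi nc_one) (a1 - 1))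
                                   (nc_mul nc_rho (nc_mul (nc_pow nc_y b1) R))) k)
            = weight q None None (repeat Srho a1 ++ repeat Sy b1 ++ w) k.
Proof.
  intros Ha HR k. destruct a1 as [|a]; [lia|]. replace (S a - 1)%nat with a by lia.
  rewrite !nc_weight_pi_only_mul, !nc_weight_stripped_pi_only_mul
    by (try apply pi_only_pow; apply pi_only_rho).
  rewrite (nc_weight_y_pow_mul q b1 _ _ HR k), !pi_eval_rho_pow, !pi_eval_rho.
  cbn [repeat app weight]. rewrite weight_repeat_rho. unfold rho_fac, tfac. ring.
Qed.

End BlockWeights.

Lemma dual_word_blocks a b js : dual_word (blocks a b js) = blocks b a (rev js).
Proof.
  induction js as [|j js IH]; simpl; auto. unfold blocks in *. simpl.
  rewrite dual_word_app, IH, flat_map_app, dual_word_app, !dual_word_repeat. simpl.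
  now rewrite app_nil_r.
Qed.

Lemma pi_free_repeat x n : x <> Spi -> pi_free (repeat x n) = true.
Proof. intros H. induction n; simpl; auto. now destruct x. Qed.

Lemma blocks_rho_y_word a b js :
  js <> [] -> (forall j, In j js -> (1 <= a j)%nat /\ (1 <= b j)%nat) ->
  exists u, blocks a b js = rho_y_word u /\ pi_free u = true.
Proof.
  induction js as [|j js IH]; intros Hne H; [congruence|].
  destruct (H j (or_introl eq_refl)) as [Ha Hb].
  change (blocks a b (j :: js)) with ((repeat Srho (a j) ++ repeat Sy (b j)) ++ blocks a b js).
  destruct (a j) as [|a'] eqn:Ea; [lia|]. destruct (b j) as [|b'] eqn:Eb; [lia|].
  destruct js as [|j' js'].
  - exists (repeat Srho a' ++ repeat Sy b'). unfold rho_y_word. simpl. split.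
    + now rewrite app_nil_r, repeat_cons, app_assoc.
    + apply pi_free_app. split; apply pi_free_repeat; discriminate.
  - destruct IH as (u & Eu & Hu); [discriminate|intros; apply H; now right|].
    rewrite Eu. exists (repeat Srho a' ++ repeat Sy (S b') ++ Srho :: u). split.
    + unfold rho_y_word. simpl. rewrite <- !app_assoc. simpl. now rewrite <- !app_assoc.
    + apply pi_free_app. split; [apply pi_free_repeat; discriminate|].
      apply pi_free_app. split; [apply pi_free_repeat; discriminate|]. exact Hu.
Qed.

Lemma zIII_rho_y_blocks q a b j0 js : Cmod q < 1 ->
  (forall j, In j (j0 :: js) -> (1 <= a j)%nat /\ (1 <= b j)%nat) ->
  zIII q (nc_prod ([nc_pow (nc_sub nc_pi nc_one) (a j0 - 1); nc_rho; nc_pow nc_y (b j0)]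
                  ++ flat_map (fun j => [nc_pow (nc_sub nc_pi nc_one) (a j); nc_pow nc_y (b j)])
                               js))
  = climit (fun K => bisum q K (blocks a b (j0 :: js)) 0 0).
Proof.
  intros Hq Hab. destruct (Hab j0 (or_introl eq_refl)) as [Ha0 Hb0].
  destruct (blocks_rho_y_word a b (j0 :: js)) as (u & Eu & Hu); [discriminate|exact Hab|].
  change (nc_prod _) with (nc_mul (nc_pow (nc_sub nc_pi nc_one) (a j0 - 1))
    (nc_mul nc_rho (nc_mul (nc_pow nc_y (b j0)) (nc_blocks a b js)))).
  rewrite (zIII_eq_climit_level_sum q _ u Hq), (climit_level_sum_eq_bisum q Hq u Hu).
  - apply climit_ext. intros K. unfold bisum_seq. now rewrite Eu.
  - apply all_ends_y_mul, all_ends_y_mul, all_ends_y_y_pow_mul; auto.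
    apply all_nil_or_ends_y_nc_blocks. intros j Hj. apply Hab. now right.
  - intros k.
    rewrite (nc_weight_head_block q _ _ _ (blocks a b js) Ha0) by apply nc_weight_nc_blocks.
    rewrite <- Eu. unfold blocks. simpl. now rewrite <- app_assoc.
Qed.

Close Scope R_scope.

Theorem theorem8p4 (q : C) (hq : (Cmod q < 1)%R) (l : nat)
  (alpha beta : nat -> nat) (hl : (1 <= l)%nat)
  (hab : forall j : nat, (1 <= j <= l)%nat -> (1 <= alpha j)%nat /\ (1 <= beta j)%nat) :
  zIII q (nc_prod
            ([nc_pow (nc_sub nc_pi nc_one) (alpha 1%nat - 1); nc_rho; nc_pow nc_y (beta 1%nat)]
             ++ flat_map (fun j => [nc_pow (nc_sub nc_pi nc_one) (alpha j); nc_pow nc_y (beta j)])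
                         (seq 2 (l - 1))))
  = zIII q (nc_prod
            ([nc_pow (nc_sub nc_pi nc_one) (beta l - 1); nc_rho; nc_pow nc_y (alpha l)]
             ++ flat_map (fun j => [nc_pow (nc_sub nc_pi nc_one) (beta j); nc_pow nc_y (alpha j)])
                         (rev (seq 1 (l - 1))))).
Proof.
  assert (Hseq : seq 1 l = 1%nat :: seq 2 (l - 1))
    by (destruct l; [lia|simpl; now rewrite Nat.sub_0_r]).
  assert (Hrev : rev (seq 1 l) = l :: rev (seq 1 (l - 1))).
  { destruct l; [lia|]. rewrite seq_S, rev_app_distr. simpl. now rewrite Nat.sub_0_r. }
  assert (Hrange : forall j, In j (seq 1 l) -> (1 <= alpha j)%nat /\ (1 <= beta j)%nat)
    by (intros j Hj; apply in_seq in Hj; apply hab; lia).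
  rewrite (zIII_rho_y_blocks q alpha beta 1%nat (seq 2 (l - 1)) hq)
    by (rewrite <- Hseq; exact Hrange).
  rewrite (zIII_rho_y_blocks q beta alpha l (rev (seq 1 (l - 1))) hq)
    by (rewrite <- Hrev; intros j Hj; apply in_rev, Hrange in Hj; tauto).
  rewrite <- Hseq, <- Hrev, <- dual_word_blocks.
  apply climit_ext. intros K. now rewrite bisum_dual.
Qed.
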